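(* Under the standing setup, fix $i\in\{1,2\}$ and suppose $X^i$ is a Markov chain with respect to its own filtration $\mathbb F^{X^i}$ with generator $\Lambda^i(t)=[\lambda^i_{x^iy^i}(t)]_{x^i,y^i\in\mathcal X^i}$. Then $$Q^i_t\,\Lambda(t)\,C^{i,*}=\Lambda^i(t)$$ for Lebesgue-almost every $t\ge0$, in the sense that for every function $g$ on $\mathcal X^i$ and every $x^i\in\mathcal X^i$ with $\mathbb P(X^i_t=x^i)>0$, $(Q^i_t\Lambda(t)C^{i,*}g)(x^i)=\sum_{y^i\in\mathcal X^i}\lambda^i_{x^iy^i}(t)g(y^i)$. Equivalently (for $i=1$), for a.e. $t$ and such $x^1$, and all $y^1\neq x^1$, $$\sum_{x^2,y^2\in\mathcal X^2}\lambda^{x^1x^2}_{y^1y^2}(t)\,\mathbb P(X^2_t=x^2\mid X^1_t=x^1)=\lambda^1_{x^1y^1}(t).$$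
   Context: Standing setup: $(\Omega,\mathcal F,\mathbb P)$ is a probability space; $\mathcal X^n\subset\mathbb R$, $n=1,2$, are finite sets and $\mathcal X=\mathcal X^1\times\mathcal X^2$. $X=(X^1,X^2)$ is a càdlàg process with values in $\mathcal X$ which is a Markov chain in its natural filtration $\mathbb F^X$, with infinitesimal generator $\Lambda(t)=[\lambda^{x^1x^2}_{y^1y^2}(t)]$ (locally integrable, nonnegative off-diagonal, rows summing to $0$), acting on functions $f$ on $\mathcal X$ by $(\Lambda(t)f)(x)=\sum_{y}\lambda^x_y(t)f(y)$. For $i=1,2$ and $t\ge0$, the operator $Q^i_t$ maps functions $f$ on $\mathcal X$ to functions on $\mathcal X^i$ by $(Q^i_tf)(x^i)=\mathbb E_{\mathbb P}(f(X_t)\mid X^i_t=x^i)$. The extension operator $C^{i,*}$ maps a function $f^i$ on $\mathcal X^i$ to the function on $\mathcal X$ given by $(C^{i,*}f^i)(x^1,x^2)=f^i(x^i)$. *)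

From HB Require Import structures.
From mathcomp Require Import all_boot all_order all_algebra.
From mathcomp Require Import all_classical all_reals all_analysis.
Set Implicit Arguments. Unset Strict Implicit. Unset Printing Implicit Defensive.
Import Order.TTheory GRing.Theory Num.Theory.
Local Open Scope classical_set_scope.
Local Open Scope ring_scope.

Definition is_generator (R : realType) (S : finType) (L : R -> S -> S -> R) : Prop :=
  [/\ (forall t x y, 0 <= t -> x != y -> 0 <= L t x y),
      (forall t x, 0 <= t -> \sum_(y : S) L t x y = 0) &
      (forall x y (T : R), 0 <= T ->
         (@lebesgue_measure R).-integrable `[0, T] (fun u => (L u x y)%:E))].

Definition gen_app (R : realType) (S : finType) (L : R -> S -> S -> R) (t : R)
  (f : S -> R) : S -> R := fun x => \sum_(y : S) L t x y * f y.

(* Paths are cadlag for the discrete topology of the finite state space. *)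
Definition cadlag (R : realType) (Om : Type) (S : Type) (Y : R -> Om -> S) : Prop :=
  forall w t, 0 <= t ->
    (exists e : R, 0 < e /\ forall s, t <= s < t + e -> Y s w = Y t w) /\
    (0 < t -> exists (e : R) (x : S), 0 < e /\ forall s, t - e < s < t -> Y s w = x).

(* Y is a Markov chain in its natural filtration with generator L:
   there is a transition (evolution) family Pt solving the Kolmogorov forward
   integral equation  Pt(s,t) = I + int_s^t Pt(s,u) L(u) du  (0 <= s <= t),
   and the finite-dimensional distributions of Y are given by Pt
   (this is the Markov property w.r.t. the natural filtration F^Y). *)
Definition markov_gen (R : realType) (d : measure_display) (Om : measurableType d)
  (P : probability Om R) (S : finType) (Y : R -> Om -> S) (L : R -> S -> S -> R) : Prop :=
  exists Pt : R -> R -> S -> S -> R,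
    (forall s t x y, 0 <= s -> s <= t ->
       (@lebesgue_measure R).-integrable `[s, t]
          (fun u => (\sum_(z : S) Pt s u x z * L u z y)%:E) /\
       Pt s t x y = (x == y)%:R +
          Rintegral (@lebesgue_measure R) `[s, t]
            (fun u => \sum_(z : S) Pt s u x z * L u z y)) /\
    (forall (n : nat) (ts : nat -> R) (xs : nat -> S),
       0 <= ts 0%N -> (forall k, (k < n)%N -> ts k <= ts k.+1) ->
       fine (P (\big[setI/setT]_(k < n.+1) [set w | Y (ts k) w = xs k])) =
       fine (P [set w | Y (ts 0%N) w = xs 0%N]) *
       \prod_(k < n) Pt (ts k) (ts k.+1) (xs k) (xs k.+1)).

(* Q^i_t f (x^i) = E(f(X_t) | X^i_t = x^i), the elementary conditional
   expectation given the event {X^i_t = x^i} (pi is the coordinate map). *)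
Definition Qop (R : realType) (d : measure_display) (Om : measurableType d)
  (P : probability Om R) (S Si : Type) (pi : S -> Si) (Y : R -> Om -> S)
  (t : R) (f : S -> R) (xi : Si) : R :=
  fine (\int[P]_(w in [set w | pi (Y t w) = xi]) (f (Y t w))%:E) /
  fine (P [set w | pi (Y t w) = xi]).

Definition Cext (R : realType) (S Si : Type) (pi : S -> Si) (g : Si -> R) : S -> R :=
  fun x => g (pi x).

From HB Require Import structures.
From mathcomp Require Import all_boot all_order all_algebra.
From mathcomp Require Import all_classical all_reals all_analysis.
From mathcomp Require Import measurable_realfun lra.
Import Order.TTheory GRing.Theory Num.Theory.
Import numFieldNormedType.Exports.
Local Open Scope classical_set_scope.
Local Open Scope ring_scope.
Set Implicit Arguments. Unset Strict Implicit. Unset Printing Implicit Defensive.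

(* Write Y = pi o X and A s t x y = P(Y_s = x, Y_t = y).  For fixed s, the map
   t |-> A s t x y satisfies two forward equations: one driven by the generator
   L1 of Y, the other obtained by summing the forward equation of X over the
   fibres of pi.  Their integrands have equal integrals over every [s, t], hence
   agree for a.e. t > s and, s ranging over the rationals, for a.e. t and all
   rational s < t at once.  Letting s increase to t, the defects of both
   integrands are bounded by P(X_s <> X_t), which is at most the integral of |L|
   over [s, t] and so tends to 0.  In the limit the integrands become
   P(Y_t = x) L1 t x y and sum_(pi v = x) P(X_t = v) sum_(pi z = y) L t v z, and
   their equality is the claim multiplied by P(Y_t = x). *)

Section lebesgue_itv.
Context {R : realType}.
Local Notation mu := (@lebesgue_measure R).

Lemma ae_eq0_of_Rintegral_itv_eq0 (s : R) (H : R -> R) :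
  (forall t, s <= t -> mu.-integrable `[s, t] (EFin \o H)) ->
  (forall t, s <= t -> \int[mu]_(u in `[s, t]) H u = 0) ->
  {ae mu, forall u, s < u -> H u = 0}.
Proof.
move=> intH H0.
have bounded n : {ae mu, forall u, s < u -> u < s + n.+1%:R -> H u = 0}.
  set T := s + n.+1%:R; have sT : s <= T by rewrite lerDl.
  pose f := H \_ `[s, T].
  have intf : mu.-integrable setT (EFin \o f).
    by rewrite /f -restrict_EFin; apply/integrable_restrict => //=; rewrite setTI; exact: intH.
  have fE u : s <= u <= T -> f u = H u.
    by move=> suT; rewrite /f patchE ifT // inE /= in_itv /=.
  have intf_itv y : mu.-integrable [set` Interval (BLeft s) (BRight y)] (EFin \o f).
    exact: integrableS intf.
  (* H is a.e. the derivative of the integral over [s, u], which vanishes. *)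
  have := FTC1 intf_itv (integrable_locally (measurable_itv _) (intH _ sT)).
  apply: filterS; first exact: (ae_filter_ringOfSetsType mu).
  move=> u + su uT => /(_ _)[]; first by rewrite lte_fin.
  move=> _; rewrite -fE ?(ltW su) ?(ltW uT) // => <-.
  rewrite derive1E -[RHS](derive_cst 0 u 1); apply: near_eq_derive; near=> y.
  have sy : s <= y by apply/ltW; near: y; exact: lt_nbhsr.
  have yT : y <= T by apply/ltW; near: y; exact: lt_nbhsl.
  rewrite /cst -(H0 y sy); apply: eq_Rintegral => v; rewrite inE /= in_itv /=.
  by move=> /andP[sv vy]; rewrite fE // sv (le_trans vy yT).
apply: filterS (ae_foralln bounded) => u Hu su.
have [n un] : exists n : nat, u < s + n.+1%:R.
  exists (Num.trunc (u - s)); rewrite -ltrBlDl.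
  have us : 0 <= u - s by rewrite subr_ge0 ltW.
  by case/andP: (truncn_itv us).
exact: Hu n su un.
Unshelve. all: by end_near. Qed.

End lebesgue_itv.

Section finite_valued.
Context d (Om : measurableType d) (R : realType) (P : probability Om R).

Lemma fin_num_prob (A : set Om) : measurable A -> P A \is a fin_num.
Proof.
move=> mA; rewrite ge0_fin_numE ?measure_ge0 //.
exact: le_lt_trans (probability_le1 P mA) (ltry _).
Qed.

Lemma fine_prob_ge0 (A : set Om) : 0 <= fine (P A).
Proof. exact/fine_ge0/measure_ge0. Qed.

Lemma fine_prob_le1 (A : set Om) : measurable A -> fine (P A) <= 1.
Proof. by move=> mA; rewrite -lee_fin fineK ?fin_num_prob ?probability_le1. Qed.

Variables (S : finType) (Y : Om -> S).
Hypothesis mY : forall z, measurable [set w | Y w = z].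

Lemma measurable_fibre (T : eqType) (pi : S -> T) (x : T) :
  measurable [set w | pi (Y w) = x].
Proof.
rewrite (_ : [set w | _] = \big[setU/set0]_(z <- index_enum S | pi z == x) [set w | Y w = z]).
  exact: bigsetU_measurable.
apply/seteqP; split => w; rewrite -bigcup_seq_cond /=.
  by move=> <-; exists (Y w); rewrite //= mem_index_enum eqxx.
by case=> z /= /andP[_ /eqP <-] ->.
Qed.

Lemma measurable_fun_fin (f : S -> R) : measurable_fun setT (fun w => (f (Y w))%:E).
Proof.
move=> _ B _; rewrite setTI.
rewrite (_ : _ @^-1` B = [set w | `[< B (f (Y w))%:E >] = true]).
  exact: (measurable_fibre (fun z => `[< B (f z)%:E >])).
by apply/seteqP; split => w /= => [/asboolP|/asboolP].
Qed.

Lemma integral_fin (E : set Om) (f : S -> R) : measurable E ->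
  fine (\int[P]_(w in E) (f (Y w))%:E) =
  \sum_z f z * fine (P (E `&` [set w | Y w = z])).
Proof.
move=> mE.
have mEY z : measurable (E `&` [set w | Y w = z]) by exact: measurableI.
have EE : E = \big[setU/set0]_(z <- index_enum S) (E `&` [set w | Y w = z]).
  apply/seteqP; split => w; rewrite -bigcup_seq /=; last by case=> z _ [].
  by move=> Ew; exists (Y w) => /=; rewrite ?mem_index_enum.
rewrite [in LHS]EE integral_bigsetU_EFin //; first last.
- by rewrite -EE; exact: measurable_funS (measurable_fun_fin f).
- by apply/trivIsetP => z z' _ _ /eqP zz'; apply/seteqP; split => w //= [[_ ->] [_]].
- exact: index_enum_uniq.
rewrite (eq_bigr (fun z => (f z * fine (P (E `&` [set w | Y w = z])))%:E)) ?sumEFin //.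
move=> z _.
rewrite (eq_integral (fun=> (f z)%:E)); last by move=> w; rewrite inE /= => -[_ ->].
by rewrite integral_cst // EFinM fineK ?fin_num_prob.
Qed.

Lemma prob_partition (E : set Om) : measurable E ->
  fine (P E) = \sum_z fine (P (E `&` [set w | Y w = z])).
Proof.
move=> mE; have := integral_fin (fun=> 1) mE.
by rewrite integral_cst //= mul1e => ->; under eq_bigr do rewrite mul1r.
Qed.

Lemma prob_partition_fibre (T : eqType) (pi : S -> T) (E : set Om) (x : T) :
  measurable E ->
  fine (P (E `&` [set w | pi (Y w) = x])) =
  \sum_(z | pi z == x) fine (P (E `&` [set w | Y w = z])).
Proof.
move=> mE; rewrite prob_partition; last exact/measurableI/measurable_fibre.
rewrite [RHS]big_mkcond; apply: eq_bigr => z _; case: eqP => [<-|zx].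
  by congr (fine (P _)); apply/seteqP; split => w /= => [[[]]|[? <-]].
rewrite (_ : _ `&` _ = set0) ?measure0 //.
by apply/seteqP; split => w //= [[_ piY] Yz]; apply: zx; rewrite -Yz.
Qed.

End finite_valued.

Section Rintegral_sum.
Context d (T : measurableType d) (R : realType) (mu : {measure set T -> \bar R}).
Variable D : set T.
Hypothesis mD : measurable D.

Lemma integrable_EFin_sum (I : Type) (s : seq I) (Pr : pred I) (f : I -> T -> R) :
  (forall i, Pr i -> mu.-integrable D (EFin \o f i)) ->
  mu.-integrable D (EFin \o (fun x => \sum_(i <- s | Pr i) f i x)).
Proof.
move=> intf; apply: eq_integrable (integrable_sum mD s intf) => // x _ /=.
by rewrite sumEFin.
Qed.

Lemma integrable_EFin_scalel (k : R) (f : T -> R) :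
  mu.-integrable D (EFin \o f) -> mu.-integrable D (EFin \o (fun x => k * f x)).
Proof. by move=> intf; apply: eq_integrable (integrableZl mD k intf). Qed.

Lemma Rintegral_sum (I : Type) (s : seq I) (Pr : pred I) (f : I -> T -> R) :
  (forall i, Pr i -> mu.-integrable D (EFin \o f i)) ->
  \int[mu]_(x in D) (\sum_(i <- s | Pr i) f i x) =
  \sum_(i <- s | Pr i) \int[mu]_(x in D) f i x.
Proof.
move=> intf; elim: s => [|a s IH].
  by under eq_Rintegral do rewrite big_nil; rewrite big_nil /Rintegral integral0.
under eq_Rintegral do rewrite big_cons; rewrite big_cons.
case: ifPn => // Pa; rewrite RintegralD ?IH //; first exact: intf.
exact: integrable_EFin_sum.
Qed.

End Rintegral_sum.

Section offdiagonal_sums.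
Context {R : realFieldType} {S : finType}.

Lemma sum_mkcond2 (M : S -> S -> R) (Pz Qz : pred S) :
  \sum_(z | Pz z) \sum_(z' | Qz z') M z z' =
  \sum_z \sum_z' M z z' * (Pz z && Qz z')%:R.
Proof.
rewrite big_mkcond; apply: eq_bigr => z _; case: (Pz z) => /=.
  by rewrite big_mkcond; apply: eq_bigr => z' _; case: (Qz z'); rewrite ?mulr1 ?mulr0.
by rewrite big1 // => z' _; rewrite mulr0.
Qed.

Lemma norm_sum_offdiag_le (M c : S -> S -> R) :
  (forall z z', 0 <= M z z') -> (forall z z', `|c z z'| <= 1) -> (forall z, c z z = 0) ->
  `|\sum_z \sum_z' M z z' * c z z'| <= \sum_z \sum_(z' | z' != z) M z z'.
Proof.
move=> M0 c1 c0; apply: le_trans (ler_norm_sum _ _ _) _; apply: ler_sum => z _.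
apply: le_trans (ler_norm_sum _ _ _) _; rewrite [leRHS]big_mkcond; apply: ler_sum => z' _.
case: eqP => [->|_]; first by rewrite c0 mulr0 normr0.
by rewrite normrM ger0_norm // ler_piMr.
Qed.

Lemma norm_sum_mul_le (a b : S -> R) (C : R) :
  (forall z, `|a z| <= C) -> `|\sum_z a z * b z| <= C * \sum_z `|b z|.
Proof.
move=> aC; apply: le_trans (ler_norm_sum _ _ _) _; rewrite mulr_sumr.
by apply: ler_sum => z _; rewrite normrM ler_wpM2r.
Qed.

End offdiagonal_sums.

Lemma norm_natbB_le1 {R : realDomainType} (b1 b2 : bool) : `|b1%:R - b2%:R : R| <= 1.
Proof. by case: b1; case: b2; rewrite ?subrr ?subr0 ?sub0r ?normrN ?normr1 ?normr0. Qed.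

Definition forward_equation (R : realType) (S : finType)
    (Pt : R -> R -> S -> S -> R) (L : R -> S -> S -> R) : Prop :=
  forall s t x y, 0 <= s -> s <= t ->
    (@lebesgue_measure R).-integrable `[s, t]
       (fun u => (\sum_(z : S) Pt s u x z * L u z y)%:E) /\
    Pt s t x y = (x == y)%:R +
       Rintegral (@lebesgue_measure R) `[s, t] (fun u => \sum_(z : S) Pt s u x z * L u z y).

Definition pair_law (R : realType) d (Om : measurableType d) (P : probability Om R)
    (S : finType) (Y : R -> Om -> S) (Pt : R -> R -> S -> S -> R) : Prop :=
  forall s t x y, 0 <= s -> s <= t ->
    fine (P ([set w | Y s w = x] `&` [set w | Y t w = y])) =
    fine (P [set w | Y s w = x]) * Pt s t x y.

Lemma fdd_pair (R : realType) d (Om : measurableType d) (P : probability Om R)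
    (S : finType) (Y : R -> Om -> S) (Pt : R -> R -> S -> S -> R) :
  (forall (n : nat) (ts : nat -> R) (xs : nat -> S),
     0 <= ts 0%N -> (forall k, (k < n)%N -> ts k <= ts k.+1) ->
     fine (P (\big[setI/setT]_(k < n.+1) [set w | Y (ts k) w = xs k])) =
     fine (P [set w | Y (ts 0%N) w = xs 0%N]) *
     \prod_(k < n) Pt (ts k) (ts k.+1) (xs k) (xs k.+1)) ->
  pair_law P Y Pt.
Proof.
move=> fdd s t x y s0 st.
have := fdd 1%N (fun k => if k == 0%N then s else t) (fun k => if k == 0%N then x else y) s0.
by rewrite big_ord_recl big_ord1 /= big_ord1 /=; apply; case.
Qed.

Section lumped_chain.
Context (R : realType) d (Om : measurableType d) (P : probability Om R).
Context (S Si : finType) (pi : S -> Si) (X : R -> Om -> S).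
Context (L : R -> S -> S -> R) (L1 : R -> Si -> Si -> R).
Context (Pt : R -> R -> S -> S -> R) (Pt1 : R -> R -> Si -> Si -> R).
Local Notation mu := (@lebesgue_measure R).

Hypothesis mX : forall t, 0 <= t -> forall z, measurable [set w | X t w = z].
Hypothesis L_integrable : forall z z' T, 0 <= T ->
  mu.-integrable `[0, T] (fun u => (L u z z')%:E).
Hypothesis Pt_forward : forward_equation Pt L.
Hypothesis Pt1_forward : forward_equation Pt1 L1.
Hypothesis X_pair : pair_law P X Pt.
Hypothesis Y_pair : pair_law P (fun t w => pi (X t w)) Pt1.

Let p t z := fine (P [set w | X t w = z]).
Let p1 t x := fine (P [set w | pi (X t w) = x]).
Let M s t z z' := fine (P ([set w | X s w = z] `&` [set w | X t w = z'])).
Let A s t x y := fine (P ([set w | pi (X s w) = x] `&` [set w | pi (X t w) = y])).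

Lemma M_sumr s t z : 0 <= s -> 0 <= t -> \sum_z' M s t z z' = p s z.
Proof. by move=> s0 t0; rewrite /p (prob_partition P (mX t0) (mX s0 z)). Qed.

Lemma M_suml s t z' : 0 <= s -> 0 <= t -> \sum_z M s t z z' = p t z'.
Proof.
move=> s0 t0; rewrite /p (prob_partition P (mX s0) (mX t0 z')).
by apply: eq_bigr => z _; rewrite /M setIC.
Qed.

Lemma p1_fibre_sum t x : 0 <= t -> p1 t x = \sum_(z | pi z == x) p t z.
Proof.
move=> t0; have := prob_partition_fibre P (mX t0) pi x measurableT.
by rewrite /p1 setTI => ->; under eq_bigr do rewrite setTI.
Qed.

Lemma A_fibre_sum s t x y : 0 <= s -> 0 <= t ->
  A s t x y = \sum_(z | pi z == x) \sum_(z' | pi z' == y) M s t z z'.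
Proof.
move=> s0 t0.
rewrite /A setIC (prob_partition_fibre P (mX s0) pi x (measurable_fibre (mX t0) pi y)).
by apply: eq_bigr => z _; rewrite setIC (prob_partition_fibre P (mX t0) pi y (mX s0 z)).
Qed.

(* The integrands of the forward equations for u |-> A s u x y: through the
   generator of Y, and through the generator of X summed over the fibres. *)
Let flux1 x y s u := p1 s x * \sum_w Pt1 s u x w * L1 u w y.
Let flux x y s u :=
  \sum_(z | pi z == x) \sum_(z' | pi z' == y) p s z * \sum_v Pt s u z v * L u v z'.

Lemma integrable_flux1 x y s t : 0 <= s -> s <= t -> mu.-integrable `[s, t] (EFin \o flux1 x y s).
Proof. by move=> s0 st; apply: integrable_EFin_scalel => //; exact: (Pt1_forward x y s0 st).1. Qed.

Lemma integrable_flux x y s t : 0 <= s -> s <= t -> mu.-integrable `[s, t] (EFin \o flux x y s).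
Proof.
move=> s0 st; do 2 apply: integrable_EFin_sum => // ? _.
by apply: integrable_EFin_scalel => //; exact: (Pt_forward _ _ s0 st).1.
Qed.

Lemma A_forward1 x y s t : 0 <= s -> s <= t ->
  A s t x y = p1 s x * (x == y)%:R + \int[mu]_(u in `[s, t]) flux1 x y s u.
Proof.
move=> s0 st; have [intf Pt1E] := Pt1_forward x y s0 st.
by rewrite /A Y_pair // Pt1E mulrDr RintegralZl.
Qed.

Lemma A_forward x y s t : 0 <= s -> s <= t ->
  A s t x y = \sum_(z | pi z == x) \sum_(z' | pi z' == y) p s z * (z == z')%:R
              + \int[mu]_(u in `[s, t]) flux x y s u.
Proof.
move=> s0 st; rewrite A_fibre_sum ?(le_trans s0 st) // Rintegral_sum //; last first.
  by move=> z _; apply: integrable_EFin_sum => // z' _; apply: integrable_EFin_scalel => //;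
     exact: (Pt_forward _ _ s0 st).1.
rewrite -big_split; apply: eq_bigr => z _.
rewrite Rintegral_sum //; last first.
  by move=> z' _; apply: integrable_EFin_scalel => //; exact: (Pt_forward _ _ s0 st).1.
rewrite -big_split; apply: eq_bigr => z' _; have [intf PtE] := Pt_forward z z' s0 st.
by rewrite /M X_pair // PtE mulrDr RintegralZl.
Qed.

Lemma Rintegral_flux1E x y s t : 0 <= s -> s <= t ->
  \int[mu]_(u in `[s, t]) flux1 x y s u = \int[mu]_(u in `[s, t]) flux x y s u.
Proof.
move=> s0 st; have := A_forward1 x y s0 (lexx s); rewrite A_forward // set_itv1.
rewrite !Rintegral_set1 !addr0 => init.
by have := A_forward1 x y s0 st; rewrite A_forward // init => /addrI.
Qed.

Lemma flux1E_ae s : 0 <= s ->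
  {ae mu, forall u, s < u -> forall x y, flux1 x y s u = flux x y s u}.
Proof.
move=> s0.
have ae_xy (xy : Si * Si) :
    {ae mu, forall u, s < u -> flux1 xy.1 xy.2 s u - flux xy.1 xy.2 s u = 0}.
  case: xy => x y; apply: ae_eq0_of_Rintegral_itv_eq0 => t st /=.
    exact: integrableB (integrable_flux1 x y s0 st) (integrable_flux x y s0 st).
  by rewrite RintegralB ?Rintegral_flux1E ?subrr //;
     [exact: integrable_flux1|exact: integrable_flux].
apply: filterS (filter_forall (ae_filter_ringOfSetsType mu) ae_xy).
by move=> u Hu su x y; apply/eqP; rewrite -subr_eq0; apply/eqP; exact: Hu (x, y) su.
Qed.

Lemma flux1E_ae_rat :
  {ae mu, forall u, forall q : rat, 0 <= (ratr q : R) -> ratr q < u ->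
     forall x y, flux1 x y (ratr q) u = flux x y (ratr q) u}.
Proof.
pose Q n (u : R) : Prop := if (unpickle n : option rat) is Some q then
  0 <= (ratr q : R) -> ratr q < u -> forall x y, flux1 x y (ratr q) u = flux x y (ratr q) u
  else True.
have aeQ n : {ae mu, forall u, Q n u}.
  rewrite /Q; case: (unpickle n) => [q|]; last exact: aeW.
  have [q0|q0] := boolP (0 <= (ratr q : R)); last by apply: aeW.
  by apply: filterS (flux1E_ae q0); [exact: (ae_filter_ringOfSetsType mu)|move=> u + _].
apply: filterS (ae_foralln aeQ) => u Hu q.
by have := Hu (pickle q); rewrite /Q pickleK.
Qed.

Let jump s t := \sum_z \sum_(z' | z' != z) M s t z z'.
Let rate_norm u := \sum_z \sum_v `|L u v z|.

Lemma integrable_normL v z s t : 0 <= s -> s <= t ->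
  mu.-integrable `[s, t] (EFin \o (fun u => `|L u v z|)).
Proof.
move=> s0 st; apply: eq_integrable (integrable_norm _) => //.
apply: integrableS (L_integrable v z (le_trans s0 st)) => //.
by apply: subset_itv; rewrite bnd_simp.
Qed.

Lemma integrable_rate_norm s t : 0 <= s -> s <= t ->
  mu.-integrable `[s, t] (EFin \o rate_norm).
Proof. by move=> s0 st; do 2 apply: integrable_EFin_sum => // ? _; exact: integrable_normL. Qed.

(* P(X_s = z, X_t <> z) = - P(X_s = z) \int_s^t (Pt s u L u) z z du, and each
   P(X_s = z, X_u = v) is at most 1. *)
Lemma jump_le s t : 0 <= s -> s <= t -> jump s t <= \int[mu]_(u in `[s, t]) rate_norm u.
Proof.
move=> s0 st; have t0 := le_trans s0 st.
rewrite Rintegral_sum //; last first.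
  by move=> z _; apply: integrable_EFin_sum => // v _; exact: integrable_normL.
apply: ler_sum => z _; have [intf PtE] := Pt_forward z z s0 st.
have -> : \sum_(z' | z' != z) M s t z z' = p s z - M s t z z.
  by rewrite -(M_sumr z s0 t0) [in RHS](bigD1 z) //= addrC addrK.
rewrite /M X_pair // PtE eqxx mulrDr mulr1 opprD addNKr -RintegralZl //.
set f := fun u => p s z * _.
have intf' : mu.-integrable `[s, t] (EFin \o f) by exact: integrable_EFin_scalel.
apply: le_trans (ler_norm _) _; rewrite normrN.
apply: le_trans (le_normr_Rintegral _ intf') _ => //.
apply: le_Rintegral => //; first exact: integrable_norm.
  by apply: integrable_EFin_sum => // v _; exact: integrable_normL.
move=> u; rewrite /= in_itv /= => /andP[su ut].
rewrite /f mulr_sumr; apply: le_trans (ler_norm_sum _ _ _) _; apply: ler_sum => v _.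
rewrite mulrA -X_pair // normrM ger0_norm ?fine_prob_ge0 // ler_piMl //.
exact/fine_prob_le1/measurableI/mX/(le_trans s0 su)/mX.
Qed.

Lemma jump_small t e : 0 <= t -> 0 < e ->
  exists2 del, 0 < del & forall s, 0 <= s -> s <= t -> t - del < s -> jump s t < e.
Proof.
move=> t0 e0.
have intf : mu.-integrable setT (EFin \o (rate_norm \_ `[0, t])).
  rewrite -restrict_EFin; apply/integrable_restrict => //=; rewrite setTI.
  exact: integrable_rate_norm.
have [del [del0 hdel]] := integral_normr_continuous intf e0.
exists del => // s s0 st tds; apply: le_lt_trans (jump_le s0 st) _.
have mu_st : (mu `[s, t] < del%:E)%E.
  rewrite lebesgue_measure_itv /=; case: ifPn => _; last by rewrite lte_fin.
  by rewrite -EFinD lte_fin ltrBlDl -ltrBlDr.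
apply: le_lt_trans (hdel _ (measurable_itv _) mu_st); rewrite le_eqVlt; apply/orP; left.
apply/eqP/eq_Rintegral => u; rewrite inE /= in_itv /= => /andP[su ut].
rewrite patchE ifT; last by rewrite inE /= in_itv /= ut (le_trans s0 su).
by rewrite ger0_norm // sumr_ge0 // => z _; rewrite sumr_ge0.
Qed.

Lemma A_near_diag s t x w : 0 <= s -> s <= t ->
  `|A s t x w - (x == w)%:R * p1 t x| <= jump s t.
Proof.
move=> s0 st; have t0 := le_trans s0 st.
rewrite A_fibre_sum // sum_mkcond2 p1_fibre_sum //.
have -> : (x == w)%:R * \sum_(z' | pi z' == x) p t z' =
    \sum_z \sum_z' M s t z z' * ((x == w) && (pi z' == x))%:R.
  rewrite -(sum_mkcond2 (M s t) (fun _ => x == w) (fun z' => pi z' == x)).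
  case: (x == w); last by rewrite mul0r big_pred0.
  by rewrite mul1r exchange_big /=; apply: eq_bigr => z' _; rewrite M_suml.
rewrite -sumrB; under eq_bigr do rewrite -sumrB; under eq_bigr do under eq_bigr do rewrite -mulrBr.
apply: norm_sum_offdiag_le => [z z'|z z'|z]; [exact: fine_prob_ge0|exact: norm_natbB_le1|].
by case: (pi z =P x) => [->|_]; rewrite ?eqxx ?andbT ?andbF ?subrr.
Qed.

Lemma M_fibre_near_diag s t x v : 0 <= s -> s <= t ->
  `|\sum_(z | pi z == x) M s t z v - (pi v == x)%:R * p t v| <= jump s t.
Proof.
move=> s0 st; have t0 := le_trans s0 st.
rewrite -(M_suml v s0 t0) mulr_sumr big_mkcond /= -sumrB.
have -> : \sum_z ((if pi z == x then M s t z v else 0) - (pi v == x)%:R * M s t z v) =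
    \sum_z \sum_z' M s t z z' * ((z' == v)%:R * ((pi z == x)%:R - (pi z' == x)%:R)).
  apply: eq_bigr => z _; rewrite (bigD1 v) //= big1 ?addr0; last first.
    by move=> z' /negbTE ->; rewrite mul0r mulr0.
  by rewrite eqxx mul1r mulrBr; case: (pi z == x); rewrite ?mulr1 ?mulr0 [_%:R * _]mulrC.
apply: norm_sum_offdiag_le => [z z'|z z'|z]; first exact: fine_prob_ge0.
  by rewrite normrM; case: (z' == v); rewrite ?normr1 ?normr0 ?mul1r ?mul0r ?norm_natbB_le1.
by rewrite subrr mulr0.
Qed.

Lemma flux_gap_le s t x y : 0 <= s -> s <= t -> flux1 x y s t = flux x y s t ->
  `|p1 t x * L1 t x y - \sum_(v | pi v == x) p t v * \sum_(z' | pi z' == y) L t v z'|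
  <= jump s t * (\sum_w `|L1 t w y| + \sum_v `|\sum_(z' | pi z' == y) L t v z'|).
Proof.
move=> s0 st fluxE; have t0 := le_trans s0 st.
set K := fun v => \sum_(z' | pi z' == y) L t v z'.
have flux1E : flux1 x y s t = \sum_w A s t x w * L1 t w y.
  by rewrite /flux1 mulr_sumr; apply: eq_bigr => w _; rewrite /A Y_pair // mulrA.
have fluxKE : flux x y s t = \sum_v (\sum_(z | pi z == x) M s t z v) * K v.
  under eq_bigr do rewrite mulr_suml; rewrite exchange_big /=.
  apply: eq_bigr => z _; under eq_bigr do rewrite mulr_sumr; rewrite exchange_big /=.
  apply: eq_bigr => z' _; rewrite mulr_sumr; apply: eq_bigr => v _.
  by rewrite /M X_pair // mulrA.
have lhsE : p1 t x * L1 t x y = \sum_w ((x == w)%:R * p1 t x) * L1 t w y.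
  rewrite (bigD1 x) //= eqxx mul1r big1 ?addr0 // => w /negbTE.
  by rewrite eq_sym => ->; rewrite !mul0r.
have rhsE : \sum_(v | pi v == x) p t v * K v = \sum_v ((pi v == x)%:R * p t v) * K v.
  by rewrite big_mkcond; apply: eq_bigr => v _; case: (pi v == x); rewrite ?mul1r ?mul0r.
rewrite lhsE rhsE.
have -> : \sum_w ((x == w)%:R * p1 t x) * L1 t w y - \sum_v ((pi v == x)%:R * p t v) * K v =
    - (\sum_w (A s t x w - (x == w)%:R * p1 t x) * L1 t w y) +
    \sum_v (\sum_(z | pi z == x) M s t z v - (pi v == x)%:R * p t v) * K v.
  under [X in _ = - X + _]eq_bigr do rewrite mulrBl.
  under [X in _ = _ + X]eq_bigr do rewrite mulrBl.
  by rewrite !sumrB -flux1E -fluxKE fluxE; lra.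
apply: le_trans (ler_normD _ _) _; rewrite normrN mulrDr.
by apply: lerD; apply: norm_sum_mul_le => ?; [exact: A_near_diag|exact: M_fibre_near_diag].
Qed.

Lemma lumped_rate_identity t x y : 0 < t ->
  (forall q : rat, 0 <= (ratr q : R) -> ratr q < t -> flux1 x y (ratr q) t = flux x y (ratr q) t) ->
  p1 t x * L1 t x y = \sum_(v | pi v == x) p t v * \sum_(z' | pi z' == y) L t v z'.
Proof.
move=> t_gt0 fluxE.
set C := \sum_w `|L1 t w y| + \sum_v `|\sum_(z' | pi z' == y) L t v z'|.
have C0 : 0 <= C by rewrite addr_ge0 // sumr_ge0.
apply/eqP; rewrite -subr_eq0 -normr_le0; apply/ler_addgt0Pr => e e0; rewrite add0r.
have [del del0 small] := jump_small (ltW t_gt0) (divr_gt0 e0 (ltr_wpDl C0 ltr01)).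
have [q] : exists q, ratr q \in `]Num.max 0 (t - del), t[.
  by apply: rat_in_itvoo; rewrite gt_max t_gt0 ltrBlDr ltrDl del0.
rewrite in_itv /= gt_max => /andP[/andP[q0 qdel] qt].
apply: le_trans (flux_gap_le (ltW q0) (ltW qt) (fluxE q (ltW q0) qt)) _.
apply: le_trans (ler_wpM2r C0 (ltW (small _ (ltW q0) (ltW qt) qdel))) _.
by rewrite mulrAC ler_pdivrMr ?ltr_wpDl // ler_pM2l // lerDl.
Qed.

Lemma Qop_lumped t x g : 0 <= t -> 0 < p1 t x ->
  (forall y, p1 t x * L1 t x y =
     \sum_(v | pi v == x) p t v * \sum_(z' | pi z' == y) L t v z') ->
  Qop P pi X t (gen_app L t (Cext pi g)) x = \sum_y L1 t x y * g y.
Proof.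
move=> t0 px rateE; rewrite /Qop (integral_fin P (mX t0) _ (measurable_fibre (mX t0) pi x)).
have -> : \sum_z gen_app L t (Cext pi g) z *
    fine (P ([set w | pi (X t w) = x] `&` [set w | X t w = z])) =
    \sum_(z | pi z == x) gen_app L t (Cext pi g) z * p t z.
  rewrite [RHS]big_mkcond; apply: eq_bigr => z _; case: eqP => [<-|zx].
    by congr (_ * fine (P _)); apply/seteqP; split => w /= => [[]|Xz]; rewrite ?Xz.
  rewrite (_ : _ `&` _ = set0) ?measure0 ?mulr0 //.
  by apply/seteqP; split => w //= [xw Xz]; apply: zx; rewrite -Xz.
suff -> : \sum_(z | pi z == x) gen_app L t (Cext pi g) z * p t z =
    p1 t x * \sum_y L1 t x y * g y by rewrite mulrC mulKf ?lt0r_neq0.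
rewrite mulr_sumr; under [RHS]eq_bigr do rewrite mulrA rateE mulr_suml.
rewrite [RHS]exchange_big /=; apply: eq_bigr => v _.
rewrite /gen_app /Cext (partition_big (fun z' => pi z') xpredT) //= mulr_suml.
apply: eq_bigr => y _; rewrite mulrC -mulrA mulr_suml.
by congr (_ * _); apply: eq_bigr => z' /eqP ->.
Qed.

Lemma lumped_generator_ae :
  {ae mu, forall t, 0 <= t -> forall (g : Si -> R) (x : Si),
     0 < fine (P [set w | pi (X t w) = x]) ->
     Qop P pi X t (gen_app L t (Cext pi g)) x = \sum_y L1 t x y * g y}.
Proof.
have ae_neq0 : {ae mu, forall t : R, t != 0}.
  exists [set 0]; split; [exact: measurable_set1|exact: lebesgue_measure_set1|].
  by move=> u /= /negP; rewrite negbK => /eqP.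
apply: filterS2 ae_neq0 flux1E_ae_rat; first exact: (ae_filter_ringOfSetsType mu).
move=> t t_neq0 fluxE t0 g x px.
have t_gt0 : 0 < t by rewrite lt_def t_neq0 t0.
by apply: Qop_lumped => // y; apply: lumped_rate_identity => // q q0 qt; exact: fluxE.
Qed.

End lumped_chain.

Theorem theorem1p3 (R : realType) (d : measure_display) (Om : measurableType d)
  (P : probability Om R) (X1 X2 : finType)
  (X : R -> Om -> (X1 * X2)%type) (L : R -> (X1 * X2)%type -> (X1 * X2)%type -> R) :
  (forall t x, 0 <= t -> measurable [set w | X t w = x]) ->
  cadlag X ->
  is_generator L ->
  markov_gen P X L ->
  (forall L1 : R -> X1 -> X1 -> R,
     is_generator L1 ->
     markov_gen P (fun t w => (X t w).1) L1 ->
     {ae (@lebesgue_measure R), forall t, 0 <= t ->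
        forall (g : X1 -> R) (x1 : X1),
          0 < fine (P [set w | (X t w).1 = x1]) ->
          Qop P fst X t (gen_app L t (Cext fst g)) x1 =
          \sum_(y1 : X1) L1 t x1 y1 * g y1}) /\
  (forall L2 : R -> X2 -> X2 -> R,
     is_generator L2 ->
     markov_gen P (fun t w => (X t w).2) L2 ->
     {ae (@lebesgue_measure R), forall t, 0 <= t ->
        forall (g : X2 -> R) (x2 : X2),
          0 < fine (P [set w | (X t w).2 = x2]) ->
          Qop P snd X t (gen_app L t (Cext snd g)) x2 =
          \sum_(y2 : X2) L2 t x2 y2 * g y2}).
Proof.
move=> mX _ [_ _ L_int] [Pt [Pt_fwd Pt_fdd]].
have mX' t (t0 : 0 <= t) z := mX t z t0.
split => [L1 _ [Pt1 [Pt1_fwd Pt1_fdd]] | L2 _ [Pt2 [Pt2_fwd Pt2_fdd]]].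
- exact: lumped_generator_ae mX' L_int Pt_fwd Pt1_fwd (fdd_pair Pt_fdd) (fdd_pair Pt1_fdd).
- exact: lumped_generator_ae mX' L_int Pt_fwd Pt2_fwd (fdd_pair Pt_fdd) (fdd_pair Pt2_fdd).
Qed.
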